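(* For any integers $p,d\ge2$, any $p$-element poset $P$ and any positive integer $k$, $$sat([k]^d,P)\le\sum_{r=d}^{d+p-2}s_{k,d,r}.$$
   Context: $[k]^d$ is ordered coordinatewise. The rank of $x\in[k]^d$ is $\sum_i x_i$, and $s_{k,d,r}$ is the number of elements of $[k]^d$ of rank $r$. For posets $P,R$, $P$ is a weak subposet of $R$ if there is an injection $i:P\to R$ with $p\le_P p'\Rightarrow i(p)\le_R i(p')$. A subset $F\subseteq Q$ is weak $P$-saturated if $F$ is weak $P$-free (does not contain $P$ as a weak subposet) but for every $x\in Q\setminus F$, $F\cup\{x\}$ contains $P$ as a weak subposet. $sat(Q,P)$ is the minimum size of a weak $P$-saturated subset of $Q$. *)

From mathcomp Require Import all_boot all_order.
Set Implicit Arguments. Unset Strict Implicit. Unset Printing Implicit Defensive.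

(* The grid [k]^d, encoded as functions 'I_d -> 'I_k; coordinate value
   j : 'I_k stands for j+1 in {1,..,k}. *)
Definition grid (k d : nat) := {ffun 'I_d -> 'I_k}.

Definition grid_le (k d : nat) : rel (grid k d) :=
  fun x y => [forall i, x i <= y i].

Definition grid_rank (k d : nat) (x : grid k d) : nat := \sum_(i < d) (x i).+1.

Definition s_kdr (k d r : nat) : nat := #|[set x : grid k d | grid_rank x == r]|.

Definition contains_weak (dP : Order.disp_t) (P : finPOrderType dP)
  (Q : finType) (leQ : rel Q) (F : {set Q}) : bool :=
  [exists f : {ffun P -> Q}, [&& injectiveb f, [forall x, f x \in F] &
                        [forall x, forall y, (x <= y)%O ==> leQ (f x) (f y)]]].

Definition weak_free dP (P : finPOrderType dP) (Q : finType) (leQ : rel Q)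
  (F : {set Q}) : bool := ~~ contains_weak P leQ F.

Definition weak_saturated dP (P : finPOrderType dP) (Q : finType) (leQ : rel Q)
  (F : {set Q}) : bool :=
  weak_free P leQ F && [forall x, (x \notin F) ==> contains_weak P leQ (x |: F)].

(* sat(Q,P): the minimum size of a weak P-saturated subset of Q.
   (Any such subset has size <= #|Q|, so the default #|Q| never undercuts the
   true minimum when a saturated family exists.) *)
Definition sat dP (P : finPOrderType dP) (Q : finType) (leQ : rel Q) : nat :=
  \big[minn/#|Q|]_(F : {set Q} | weak_saturated P leQ F) #|F|.

From mathcomp Require Import all_boot all_order.
From mathcomp Require Import zify.
Set Implicit Arguments. Unset Strict Implicit. Unset Printing Implicit Defensive.
Import Order.TTheory.

(* Take a down-closed P-free family F of [k]^d that is maximal among such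
   families.  It is P-saturated: for x outside F, pick a minimal y <= x outside
   F; then y |: F is still down-closed, hence contains a copy of P, which must
   use y, and moving that point up from y to x keeps it a copy of P, because
   nothing of F lies above y.  On the other hand F contains no element of rank
   p - 1 + d or more: below such an element lies a chain of p elements, all in
   F, and P embeds in a p-chain along a linear extension.  So F is contained in
   the ranks d, ..., d + p - 2. *)

Section KeyRank.
Variables (T : finType) (dU : Order.disp_t) (U : orderType dU) (key : T -> U).

Definition key_rank (a : T) : nat := #|[set b | (key b < key a)%O]|.

Lemma key_rank_lt_card a : key_rank a < #|T|.
Proof.
rewrite /key_rank -cardsT; apply/proper_card/properP; split; first exact: subsetT.
by exists a; rewrite !inE ?ltxx.
Qed.

Lemma key_rank_mono a b : (key a < key b)%O -> key_rank a < key_rank b.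
Proof.
move=> ab; apply/proper_card/properP; split.
  by apply/subsetP => c; rewrite !inE => /lt_trans; apply.
by exists a; rewrite !inE ?ab ?ltxx.
Qed.

Lemma key_rank_inj : injective key -> injective key_rank.
Proof.
move=> key_inj a b eq_ab; apply: key_inj.
by case: (ltgtP (key a) (key b)) => // /key_rank_mono; rewrite eq_ab ltnn.
Qed.

End KeyRank.

Lemma linear_extension dP (P : finPOrderType dP) : exists s : P -> nat,
  [/\ injective s, forall a, s a < #|P| & {homo s : a b / (a <= b)%O >-> a <= b}].
Proof.
(* Sort by the number of strict predecessors, breaking ties by enum_rank. *)
pose key (a : P) : nat *l nat := (#|[set b | (b < a)%O]|, val (enum_rank a)).
have key_inj : injective key by move=> a b [_ /val_inj/enum_rank_inj].
have key_mono a b : (a < b)%O -> (key a < key b)%O.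
  move=> ab; have : #|[set c | (c < a)%O]| < #|[set c | (c < b)%O]|.
    apply/proper_card/properP; split.
      by apply/subsetP => c; rewrite !inE => /lt_trans; apply.
    by exists a; rewrite !inE ?ab ?ltxx.
  by rewrite ltxi_pair /=; lia.
exists (key_rank key); split; first exact: key_rank_inj.
  exact: key_rank_lt_card.
move=> a b; rewrite le_eqVlt => /predU1P [-> //|ab].
exact/ltnW/key_rank_mono/key_mono.
Qed.

Section WeakContainment.
Variables (dP : Order.disp_t) (P : finPOrderType dP) (Q : finType) (leQ : rel Q).

Lemma contains_weakP (F : {set Q}) :
  reflect (exists f : P -> Q, [/\ injective f, forall a, f a \in F &
                                  {homo f : a b / (a <= b)%O >-> leQ a b}])
          (contains_weak P leQ F).
Proof.
apply: (iffP existsP) => [[f /and3P [/injectiveP f_inj /forallP fF /forallP f_mono]]|].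
  by exists f; split=> // a b; apply/implyP; exact: (forallP (f_mono a) b).
case=> f [f_inj fF f_mono]; exists (finfun f); apply/and3P; split.
- by apply/injectiveP => a b; rewrite !ffunE => /f_inj.
- by apply/forallP => a; rewrite ffunE.
- by apply/forallP => a; apply/forallP => b; apply/implyP; rewrite !ffunE => /f_mono.
Qed.

Lemma contains_weak_chain (F : {set Q}) (n : nat) (c : nat -> Q) :
    #|P| <= n -> {in gtn n &, injective c} -> (forall i, i < n -> c i \in F) ->
    (forall i j, i <= j < n -> leQ (c i) (c j)) ->
  contains_weak P leQ F.
Proof.
move=> Pn c_inj cF c_mono; have [s [s_inj s_lt s_mono]] := linear_extension P.
have s_lt_n a : s a < n by exact: leq_trans (s_lt a) Pn.
apply/contains_weakP; exists (c \o s); split=> [a b /= eq_c | a | a b ab /=].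
- by apply/s_inj/c_inj; rewrite ?inE.
- exact: cF.
- by apply: c_mono; rewrite (s_mono _ _ ab) s_lt_n.
Qed.

End WeakContainment.

Section MaximalDownClosed.
Variables (dP : Order.disp_t) (P : finPOrderType dP) (Q : finType) (leQ : rel Q).
Hypotheses (leQ_refl : reflexive leQ) (leQ_trans : transitive leQ).
Variable rk : Q -> nat.
Hypothesis rk_lt : forall x y, leQ x y -> x != y -> rk x < rk y.

Definition down_closed (F : {set Q}) : bool :=
  [forall u in F, forall w, leQ w u ==> (w \in F)].

Lemma down_closedP (F : {set Q}) :
  reflect {in F, forall u w, leQ w u -> w \in F} (down_closed F).
Proof.
apply: (iffP forall_inP) => F_down u uF; last by apply/forallP => w; exact/implyP/F_down.
by move=> w; apply/implyP/(forallP (F_down u uF)).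
Qed.

Lemma down_closed_setU1 (F : {set Q}) y :
  down_closed F -> (forall w, leQ w y -> w != y -> w \in F) -> down_closed (y |: F).
Proof.
move=> /down_closedP F_down below_y; apply/down_closedP => u.
rewrite in_setU1 => /predU1P [-> w wy|uF w wu]; rewrite in_setU1.
  by case: (eqVneq w y) => [//|ne_wy]; rewrite below_y ?orbT.
by rewrite (F_down u uF w wu) orbT.
Qed.

Lemma contains_weak_setU1_raise (F : {set Q}) x y :
    down_closed F -> weak_free P leQ F -> x \notin F -> leQ y x ->
    contains_weak P leQ (y |: F) -> contains_weak P leQ (x |: F).
Proof.
move=> /down_closedP F_down F_free xF yx Y_P.
have yF : y \notin F.
  apply: contraNN F_free => yF.
  by have /setUidPr <- : [set y] \subset F by rewrite sub1set.
case/contains_weakP: Y_P => f [f_inj fF f_mono].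
have [q fq] : exists q, f q = y.
  case: (pickP (fun q => f q == y)) => [q /eqP|f_ne_y]; first by exists q.
  case/negP: F_free; apply/contains_weakP; exists f; split=> // a.
  by move: (fF a); rewrite in_setU1 f_ne_y.
have fF_ne_q a : a != q -> f a \in F.
  move: (fF a); rewrite in_setU1 => /predU1P [fa|//].
  by rewrite -fq in fa; rewrite (f_inj _ _ fa) eqxx.
apply/contains_weakP; exists (fun a => if a == q then x else f a); split.
- move=> a b; case: (eqVneq a q) => [->|aq]; case: (eqVneq b q) => [->|bq] //.
  + by move=> eq_xfb; move: (fF_ne_q b bq); rewrite -eq_xfb (negbTE xF).
  + by move=> eq_fax; move: (fF_ne_q a aq); rewrite eq_fax (negbTE xF).
  + exact: f_inj.
- move=> a; case: eqP => [_|/eqP aq]; first by rewrite setU11.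
  by rewrite in_setU1 fF_ne_q ?orbT.
- move=> a b ab; have fab := f_mono a b ab.
  case: (eqVneq a q) => [aq|aq]; case: (eqVneq b q) => [bq|bq] //.
  + (* nothing of F lies above y *)
    by move: yF; rewrite -fq -aq (F_down _ (fF_ne_q b bq) _ fab).
  + by apply: leQ_trans yx; rewrite -fq -bq.
Qed.

Lemma max_down_closed_saturated (F : {set Q}) :
    down_closed F -> weak_free P leQ F ->
    (forall G, down_closed G -> weak_free P leQ G -> #|G| <= #|F|) ->
  weak_saturated P leQ F.
Proof.
move=> F_down F_free F_max; rewrite /weak_saturated F_free.
apply/forallP => x; apply/implyP => xF.
have x_out : leQ x x && (x \notin F) by rewrite leQ_refl.
have [y /andP [yx yF] y_min] := @arg_minnP _ x (fun y => leQ y x && (y \notin F)) rk x_out.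
apply: (contains_weak_setU1_raise F_down F_free xF yx).
apply: contraT => YF.
have Y_down : down_closed (y |: F).
  apply: down_closed_setU1 => // w wy ne_wy; apply: contraT => wF.
  have := y_min w; rewrite (leQ_trans wy yx) wF => /(_ isT).
  by rewrite leqNgt (rk_lt wy ne_wy).
by have := F_max _ Y_down YF; rewrite cardsU1 yF; lia.
Qed.

Lemma exists_down_closed_saturated :
  0 < #|P| -> exists2 F, down_closed F & weak_saturated P leQ F.
Proof.
move=> P_gt0; pose ok G := down_closed G && weak_free P leQ G.
have ok0 : ok set0.
  apply/andP; split; first by apply/down_closedP => u; rewrite in_set0.
  apply/contains_weakP => -[f [_ f0 _]]; have [a _] := card_gt0P P_gt0.
  by have := f0 a; rewrite in_set0.
have [F /andP [F_down F_free] F_max] := @arg_maxnP _ set0 ok (fun G => #|G|) ok0.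
exists F => //; apply: max_down_closed_saturated => // G G_down G_free.
by apply: F_max; rewrite /ok G_down.
Qed.

End MaximalDownClosed.

Section Grid.
Variables k d : nat.
Local Notation Q := (grid k d).

Definition grid_rank0 (x : Q) : nat := \sum_(i < d) (x i : nat).

Lemma grid_rankE (x : Q) : grid_rank x = grid_rank0 x + d.
Proof.
rewrite /grid_rank /grid_rank0; under eq_bigr do rewrite -addn1.
by rewrite big_split /= sum_nat_const card_ord muln1.
Qed.

Lemma grid_le_refl : reflexive (@grid_le k d).
Proof. by move=> x; apply/forallP. Qed.

Lemma grid_le_trans : transitive (@grid_le k d).
Proof.
by move=> y x z /forallP xy /forallP yz; apply/forallP => i; exact: leq_trans (xy i) (yz i).
Qed.

Lemma grid_rank0_lt (x y : Q) : grid_le x y -> x != y -> grid_rank0 x < grid_rank0 y.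
Proof.
move=> /forallP xy ne_xy.
have [i ne_i] : exists i, x i != y i.
  apply/existsP; apply: contraNT ne_xy => /existsPn eq_i.
  by apply/eqP/ffunP => i; apply/eqP; rewrite -[_ == _]negbK eq_i.
have lt_i : x i < y i by rewrite ltn_neqAle xy andbT.
rewrite /grid_rank0 (bigD1 i) //= [X in _ < X](bigD1 i) //= -addSn.
by apply: leq_add lt_i _; apply: leq_sum => j _; exact: xy.
Qed.

Lemma grid_rank0_pred (z : Q) :
  0 < grid_rank0 z -> exists2 z', grid_le z' z & grid_rank0 z' = (grid_rank0 z).-1.
Proof.
move=> z_gt0; have [j zj_gt0] : exists j, 0 < z j.
  apply/existsP; apply: contraTT z_gt0 => /existsPn z0.
  by rewrite -leqNgt leqn0 /grid_rank0 sum_nat_eq0; apply/forallP => i; rewrite -leqn0 leqNgt z0.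
have zj_lt : (z j).-1 < k by exact: leq_ltn_trans (leq_pred _) (ltn_ord _).
exists [ffun i => if i == j then Ordinal zj_lt else z i].
  by apply/forallP => i; rewrite ffunE; case: eqP => [->|_]; rewrite ?leq_pred.
rewrite /grid_rank0 (bigD1 j) //= [in RHS](bigD1 j) //= ffunE eqxx /=.
rewrite (eq_bigr (fun i => (z i : nat))); last by move=> i /negbTE ne_ij; rewrite ffunE ne_ij.
by case: (nat_of_ord (z j)) zj_gt0.
Qed.

Lemma grid_chain_below n (z : Q) : grid_rank0 z = n -> exists c : nat -> Q,
  [/\ c n = z, forall i, i <= n -> grid_rank0 (c i) = i &
      forall i j, i <= j <= n -> grid_le (c i) (c j)].
Proof.
elim: n z => [|n IHn] z zn.
  exists (fun=> z); split=> // [i|i j _]; first by rewrite leqn0 => /eqP ->.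
  exact: grid_le_refl.
have [|z' z'z z'n] := @grid_rank0_pred z; first by rewrite zn.
rewrite zn /= in z'n; have [c [cn c_rank c_mono]] := IHn z' z'n.
exists (fun i => if i == n.+1 then z else c i); rewrite eqxx; split=> //.
  by move=> i; case: eqP => [->|/eqP ne_i] // i_le; apply: c_rank; lia.
move=> i j /andP [ij jn]; case: (eqVneq j n.+1) => [eq_j|ne_j].
  case: eqP => [_|/eqP ne_i]; first exact: grid_le_refl.
  by apply: grid_le_trans z'z; rewrite -cn; apply: c_mono; lia.
by rewrite ifN; [apply: c_mono; lia | apply/eqP; lia].
Qed.

Lemma down_closed_free_grid_rank0_lt dP (P : finPOrderType dP) (F : {set Q}) x :
    down_closed (@grid_le k d) F -> weak_free P (@grid_le k d) F -> x \in F ->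
  grid_rank0 x < #|P|.-1.
Proof.
move=> /down_closedP F_down /negP F_free xF; rewrite ltnNge; apply/negP => Px.
have [c [cx c_rank c_mono]] := grid_chain_below (erefl (grid_rank0 x)).
apply: F_free; apply: (@contains_weak_chain _ _ _ _ _ (grid_rank0 x).+1 c).
- lia.
- move=> i j; rewrite !inE !ltnS => i_le j_le eq_c.
  by rewrite -(c_rank _ i_le) -(c_rank _ j_le) eq_c.
- move=> i; rewrite ltnS => i_le; apply: (F_down _ xF).
  by rewrite -cx; apply: c_mono; rewrite i_le leqnn.
- by move=> i j; rewrite ltnS; exact: c_mono.
Qed.

Lemma sum_s_kdr m : \sum_(d <= r < d + m) s_kdr k d r = #|[set x : Q | grid_rank0 x < m]|.
Proof.
elim: m => [|m IHm].
  rewrite addn0 big_geq //; apply/esym/eqP; rewrite cards_eq0; apply/eqP/setP => x.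
  by rewrite !inE ltn0.
rewrite addnS big_nat_recr ?leq_addr //= IHm.
have -> : [set x : Q | grid_rank0 x < m.+1] =
          [set x | grid_rank0 x < m] :|: [set x | grid_rank x == d + m].
  by apply/setP => x; rewrite !inE grid_rankE; apply/idP/orP; lia.
rewrite cardsU.
have -> : [set x : Q | grid_rank0 x < m] :&: [set x | grid_rank x == d + m] = set0.
  by apply/setP => x; rewrite !inE grid_rankE; apply/negP; lia.
by rewrite cards0 subn0.
Qed.

End Grid.

Theorem proposition1p7 (p d : nat) (dP : Order.disp_t) (P : finPOrderType dP)
  (k : nat) :
  2 <= p -> 2 <= d -> #|P| = p -> 0 < k ->
  sat P (@grid_le k d) <= \sum_(d <= r < d + p - 1) s_kdr k d r.
Proof.
move=> p_ge2 _ P_p _.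
have P_gt0 : 0 < #|P| by rewrite P_p; lia.
have [F F_down F_sat] := exists_down_closed_saturated (@grid_le_refl k d)
  (@grid_le_trans k d) (@grid_rank0_lt k d) P_gt0.
have F_free : weak_free P (@grid_le k d) F by case/andP: F_sat.
have F_low : F \subset [set x | grid_rank0 x < p - 1].
  apply/subsetP => x xF; rewrite inE -P_p subn1.
  exact: down_closed_free_grid_rank0_lt F_down F_free xF.
rewrite -addnBA ?(ltnW p_ge2) // sum_s_kdr.
exact: leq_trans (@bigmin_le_cond _ nat _ _ F _ _ F_sat) (subset_leq_card F_low).
Qed.
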